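(* Assume $C(u,v)\equiv C>0$ for $u,v\in\{x,y\}$, $\beta=0$ and $\mu=1$. Then the system $\dot n^x=P(n^x,n^y)$, $\dot n^y=Q(n^x,n^y)$ has no fixed point in $(0,\infty)^2$, and for every initial condition in $(0,\infty)^2$ the solution converges to $(0,r(y)/C)$ if $S(y;x)>0$ and to $(r(x)/C,0)$ if $S(y;x)<0$, where here $S(y;x)=r(y)-r(x)+\alpha(y,x)=-S(x;y)$.
   Context: Let $r(x),r(y)>0$, $\alpha(u,v)=\tau(u,v)-\tau(v,u)$ with $\tau\ge0$, and $$P(u,v)=\Big(r(x)-Cu-Cv+\frac{\alpha(x,y)}{u+v}v\Big)u,\qquad Q(u,v)=\Big(r(y)-Cu-Cv-\frac{\alpha(x,y)}{u+v}u\Big)v.$$ In general the invasion fitness is $S(y;x)=r(y)-\frac{C(y,x)r(x)}{C(x,x)}+\frac{\alpha(y,x)r(x)}{\beta C(x,x)+\mu r(x)}$, which reduces to $r(y)-r(x)+\alpha(y,x)$ in this case. *)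

From Stdlib Require Import Reals.
Open Scope R_scope.

(* alpha(u,v) = tau(u,v) - tau(v,u); txy = tau(x,y), tyx = tau(y,x). *)
Definition alpha (t_uv t_vu : R) : R := t_uv - t_vu.

(* Vector field with C(u,v) = C constant; a = alpha(x,y). *)
Definition Pf (rx C a : R) (u v : R) : R := (rx - C*u - C*v + a / (u + v) * v) * u.
Definition Qf (ry C a : R) (u v : R) : R := (ry - C*u - C*v - a / (u + v) * u) * v.

Definition S_gen (ry rx Cyx Cxx ayx beta mu : R) : R :=
  ry - Cyx * rx / Cxx + ayx * rx / (beta * Cxx + mu * rx).

Definition is_solution (F G : R -> R -> R) (nx ny : R -> R) : Prop :=
  (forall t, 0 < t ->
     derivable_pt_lim nx t (F (nx t) (ny t)) /\
     derivable_pt_lim ny t (G (nx t) (ny t))) /\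
  (forall eps, 0 < eps -> exists delta, 0 < delta /\
     forall t, 0 <= t < delta ->
       Rabs (nx t - nx 0) < eps /\ Rabs (ny t - ny 0) < eps).

Definition conv_infty (f : R -> R) (l : R) : Prop :=
  forall eps, 0 < eps -> exists T, forall t, T <= t -> Rabs (f t - l) < eps.

(** The interaction terms cancel twice.  Along a positive solution,
    [(ln nx - ln ny)' = r(x) - r(y) + alpha(x,y) = - S(y;x)], and
    [(nx + ny)' = r(x) nx + r(y) ny - C (nx + ny)^2].  So for [S(y;x) > 0] the
    share of [x] decays exponentially, after which [ln (nx + ny)] has slope
    close to [r(y) - C (nx + ny)] and is attracted to [ln (r(y) / C)]; the case
    [S(y;x) < 0] is the same with the two types exchanged.  The same two
    identities reduce the system to a linear equation for [1 / (nx + ny)],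
    which gives global solutions explicitly. *)

From Stdlib Require Import Reals Lra Classical.
From Coquelicot Require Import Coquelicot.
Open Scope R_scope.

Definition at_top (P : R -> Prop) : Prop := exists T, forall t, T <= t -> P t.

Lemma at_top_ge T : at_top (fun t => T <= t).
Proof. exists T; auto. Qed.

Lemma at_top_mono (P Q : R -> Prop) :
  (forall t, P t -> Q t) -> at_top P -> at_top Q.
Proof. intros HPQ [T HT]; exists T; auto. Qed.

Lemma at_top_and (P Q : R -> Prop) :
  at_top P -> at_top Q -> at_top (fun t => P t /\ Q t).
Proof.
  intros [T1 H1] [T2 H2]. exists (Rmax T1 T2). intros t Ht.
  pose proof (Rmax_l T1 T2). pose proof (Rmax_r T1 T2).
  split; [apply H1 | apply H2]; lra.
Qed.

Lemma conv_infty_minus (f g : R -> R) (l m : R) :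
  conv_infty f l -> conv_infty g m -> conv_infty (fun t => f t - g t) (l - m).
Proof.
  intros Hf Hg eps Heps.
  apply (at_top_mono (fun t => Rabs (f t - l) < eps / 2 /\ Rabs (g t - m) < eps / 2)).
  - intros t [h1 h2].
    replace (f t - g t - (l - m)) with ((f t - l) - (g t - m)) by ring.
    apply (Rle_lt_trans _ (Rabs (f t - l) + Rabs (g t - m))); [|lra].
    rewrite <- (Rabs_Ropp (g t - m)). apply Rabs_triang.
  - apply at_top_and; [apply Hf | apply Hg]; lra.
Qed.

Lemma conv_infty_ext (f g : R -> R) (l : R) :
  (forall t, f t = g t) -> conv_infty f l -> conv_infty g l.
Proof.
  intros Hfg Hf eps Heps. destruct (Hf eps Heps) as [T HT].
  exists T. intros t Ht. rewrite <- Hfg. auto.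
Qed.

Lemma derivable_pt_lim_continuity_pt f t l :
  derivable_pt_lim f t l -> continuity_pt f t.
Proof. intros H. apply derivable_continuous_pt. exists l. exact H. Qed.

Lemma derivable_pt_lim_val f t l l' :
  l = l' -> derivable_pt_lim f t l -> derivable_pt_lim f t l'.
Proof. intros <-; auto. Qed.

Lemma derivable_pt_lim_ln_comp f t l : 0 < f t ->
  derivable_pt_lim f t l -> derivable_pt_lim (fun x => ln (f x)) t (l / f t).
Proof.
  intros Hpos Hf. apply (derivable_pt_lim_val _ _ (/ f t * l)); [unfold Rdiv; ring|].
  exact (derivable_pt_lim_comp f ln t l (/ f t) Hf (derivable_pt_lim_ln _ Hpos)).
Qed.

Lemma continuity_pt_Rmin f g x : continuity_pt f x -> continuity_pt g x ->
  continuity_pt (fun y => Rmin (f y) (g y)) x.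
Proof.
  intros Hf Hg.
  apply (continuity_pt_ext (fun y => (f y + g y - Rabs (f y - g y)) / 2)).
  { intros y. unfold Rmin, Rabs. destruct Rle_dec, Rcase_abs; lra. }
  apply continuity_pt_mult; [|apply continuity_pt_const; intros ? ?; reflexivity].
  apply continuity_pt_minus; [apply continuity_pt_plus; auto|].
  apply (continuity_pt_comp (fun y => f y - g y) Rabs).
  - apply continuity_pt_minus; auto.
  - apply Rcontinuity_abs.
Qed.

Lemma continuity_pt_eps (g : R -> R) x : continuity_pt g x ->
  forall e, 0 < e -> exists d, 0 < d /\
    forall y, Rabs (y - x) < d -> Rabs (g y - g x) < e.
Proof.
  intros H e He.
  destruct (proj1 (continuity_pt_locally g x) H (mkposreal e He)) as [d Hd].
  exists d. split; [apply cond_pos | intros y Hy; apply Hd, Hy].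
Qed.

(* The supremum of the sublevel set [g <= 0] in [a, b]. *)
Lemma last_nonpos (g : R -> R) a b : a < b ->
  (forall x, a <= x <= b -> continuity_pt g x) -> g a <= 0 -> 0 < g b ->
  exists s, a <= s < b /\ g s <= 0 /\ forall r, s < r <= b -> 0 < g r.
Proof.
  intros Hab Hc Ha Hb.
  set (E x := a <= x <= b /\ g x <= 0).
  assert (Hbnd : bound E) by (exists b; intros x [Hx _]; lra).
  assert (Hne : exists x, E x) by (exists a; split; [lra | exact Ha]).
  destruct (completeness E Hbnd Hne) as [s [Hub Hlub]].
  assert (Has : a <= s) by (apply Hub; split; [lra | exact Ha]).
  assert (Hsb : s <= b) by (apply Hlub; intros x [Hx _]; lra).
  assert (Hgs : g s <= 0).
  { apply Rnot_lt_le. intros Hpos.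
    destruct (continuity_pt_eps g s (Hc s (conj Has Hsb)) (g s) Hpos) as [d [Hd Hnear]].
    assert (Hx : exists x, E x /\ s - d < x).
    { apply NNPP. intros Hn. assert (s <= s - d) by
        (apply Hlub; intros x Hx; apply Rnot_lt_le; intros Hlt; eauto). lra. }
    destruct Hx as [x [Ex Hx]].
    assert (x <= s) by (apply Hub, Ex).
    specialize (Hnear x ltac:(rewrite Rabs_left1; lra)).
    apply Rabs_def2 in Hnear. destruct Ex. lra. }
  exists s. split; [|split; [exact Hgs|]].
  - split; [exact Has|]. destruct (Rle_lt_or_eq_dec s b Hsb); [auto | subst; lra].
  - intros r Hr. apply Rnot_le_lt. intros Hgr.
    assert (r <= s) by (apply Hub; split; [lra | exact Hgr]). lra.
Qed.

Lemma first_nonpos (g : R -> R) a b : a < b ->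
  (forall x, a <= x <= b -> continuity_pt g x) -> 0 < g a -> g b <= 0 ->
  exists s, a < s <= b /\ g s <= 0 /\ forall r, a <= r < s -> 0 < g r.
Proof.
  intros Hab Hc Ha Hb.
  destruct (last_nonpos (fun x => g (- x)) (- b) (- a)) as [s [Hs [Hgs Hpos]]].
  - lra.
  - intros x Hx. apply (continuity_pt_comp Ropp g).
    + apply continuity_pt_opp, continuity_pt_id.
    + apply Hc. lra.
  - rewrite Ropp_involutive. exact Hb.
  - rewrite Ropp_involutive. exact Ha.
  - exists (- s). split; [lra | split; [exact Hgs|]].
    intros r Hr. rewrite <- (Ropp_involutive r). apply Hpos. lra.
Qed.

Lemma affine_of_const_deriv (f : R -> R) (c T : R) :
  (forall t, T <= t -> derivable_pt_lim f t c) ->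
  forall t, T <= t -> f t = f T + c * (t - T).
Proof.
  intros Hd t Ht. destruct (Rle_lt_or_eq_dec T t Ht) as [Hlt | <-]; [|ring].
  destruct (MVT_cor2 f (fun _ => c) T t Hlt (fun x Hx => Hd x (proj1 Hx))) as [x [Hx _]].
  lra.
Qed.

(* Once [f] has reached [lam] it stays below: on a last excursion above [lam]
   the mean value theorem would make it decrease. *)
Lemma at_top_le_of_deriv_le (f df : R -> R) (T lam c : R) : 0 < c ->
  (forall t, T <= t -> derivable_pt_lim f t (df t)) ->
  (forall t, T <= t -> lam < f t -> df t <= - c) ->
  at_top (fun t => f t <= lam).
Proof.
  intros Hc Hd Hdec.
  assert (Hhit : exists t1, T <= t1 /\ f t1 <= lam).
  { apply NNPP. intros Hn.
    assert (Habove : forall t, T <= t -> lam < f t).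
    { intros t Ht. apply Rnot_le_lt. intros Hle. eauto. }
    set (t := T + Rabs (f T - lam) / c + 1).
    assert (HTt : T < t).
    { unfold t. assert (0 <= Rabs (f T - lam) / c) by
        (apply Rdiv_le_0_compat; [apply Rabs_pos | lra]). lra. }
    destruct (MVT_cor2 f df T t HTt (fun x Hx => Hd x (proj1 Hx))) as [x [Hx1 Hx2]].
    assert (df x <= - c) by (apply Hdec; [lra | apply Habove; lra]).
    assert (Hft := Habove t (Rlt_le _ _ HTt)).
    assert (c * (t - T) = Rabs (f T - lam) + c) by (unfold t; field; lra).
    pose proof (Rle_abs (f T - lam)). nra. }
  destruct Hhit as [t1 [Ht1 Hf1]]. exists t1. intros t Ht.
  apply Rnot_lt_le. intros Hft.
  destruct (Rle_lt_or_eq_dec t1 t Ht) as [Hlt | <-]; [|lra].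
  destruct (last_nonpos (fun x => f x - lam) t1 t Hlt) as [s [[Hs1 Hs2] [Hs3 Hs4]]].
  - intros x Hx. apply continuity_pt_minus.
    + apply (derivable_pt_lim_continuity_pt _ _ _ (Hd x ltac:(lra))).
    + apply continuity_pt_const. intros ? ?; reflexivity.
  - lra.
  - lra.
  - destruct (MVT_cor2 f df s t Hs2 (fun x Hx => Hd x ltac:(lra))) as [x [Hx1 Hx2]].
    assert (df x <= - c) by (apply Hdec; [lra | specialize (Hs4 x ltac:(lra)); lra]).
    nra.
Qed.

(* [u * exp (K x)] is nondecreasing. *)
Lemma pos_of_deriv_ge_linear (u du : R -> R) (K a b : R) : a < b ->
  (forall x, a <= x <= b -> derivable_pt_lim u x (du x)) ->
  (forall x, a < x < b -> - K * u x <= du x) -> 0 < u a -> 0 < u b.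
Proof.
  intros Hab Hd Hineq Ha.
  set (phi x := u x * exp (K * x)).
  assert (Hphi : forall x, a <= x <= b ->
            derivable_pt_lim phi x ((du x + K * u x) * exp (K * x))).
  { intros x Hx. apply (derivable_pt_lim_val _ _ (du x * exp (K * x) + u x * (exp (K * x) * K)));
      [ring|].
    apply (derivable_pt_lim_mult u (fun x => exp (K * x))); [apply Hd; auto|].
    apply is_derive_Reals. auto_derive; auto. ring. }
  destruct (MVT_cor2 phi _ a b Hab Hphi) as [c [Hc1 Hc2]].
  assert (0 <= (du c + K * u c) * exp (K * c)).
  { apply Rmult_le_pos; [pose proof (Hineq c Hc2); lra | apply Rlt_le, exp_pos]. }
  pose proof (exp_pos (K * a)). pose proof (exp_pos (K * b)).
  unfold phi in Hc1. apply Rnot_le_lt. intros Hub. nra.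
Qed.

Lemma Qf_as_Pf r C a u v : Qf r C a u v = Pf r C (- a) v u.
Proof. unfold Pf, Qf. rewrite (Rplus_comm v u). unfold Rdiv. ring. Qed.

Lemma is_solution_swap rx ry C a nx ny :
  is_solution (Pf rx C a) (Qf ry C a) nx ny ->
  is_solution (Pf ry C (- a)) (Qf rx C (- a)) ny nx.
Proof.
  assert (Hsym : forall u v, Qf rx C (- a) v u = Pf rx C a u v).
  { intros u v. rewrite Qf_as_Pf, Ropp_involutive. reflexivity. }
  intros [Hd Hc]. split.
  - intros t Ht. rewrite <- Qf_as_Pf, Hsym. destruct (Hd t Ht); auto.
  - intros e He. destruct (Hc e He) as [d [Hd0 Hd1]].
    exists d. split; [exact Hd0|]. intros t Ht. destruct (Hd1 t Ht); auto.
Qed.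

Lemma is_solution_of_derivable F G nx ny :
  (forall t, 0 <= t -> derivable_pt_lim nx t (F (nx t) (ny t)) /\
                       derivable_pt_lim ny t (G (nx t) (ny t))) ->
  is_solution F G nx ny.
Proof.
  intros Hd. split; [intros t Ht; apply Hd; lra|].
  intros e He.
  destruct (Hd 0 (Rle_refl 0)) as [Hx Hy].
  destruct (continuity_pt_eps _ 0 (derivable_pt_lim_continuity_pt _ _ _ Hx) e He)
    as [d1 [Hd1 Hx']].
  destruct (continuity_pt_eps _ 0 (derivable_pt_lim_continuity_pt _ _ _ Hy) e He)
    as [d2 [Hd2 Hy']].
  exists (Rmin d1 d2). split; [apply Rmin_glb_lt; auto|].
  intros t Ht. pose proof (Rmin_l d1 d2). pose proof (Rmin_r d1 d2).
  split; [apply Hx' | apply Hy']; rewrite Rminus_0_r, Rabs_pos_eq; lra.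
Qed.

Lemma S_gen_constant_competition ry rx C a : rx <> 0 -> C <> 0 ->
  S_gen ry rx C C a 0 1 = ry - rx + a.
Proof. intros Hrx HC. unfold S_gen. field. auto. Qed.

Lemma interior_equilibrium_fitness rx ry C a u v : 0 < u -> 0 < v ->
  Pf rx C a u v = 0 -> Qf ry C a u v = 0 -> ry - rx - a = 0.
Proof.
  unfold Pf, Qf. intros Hu Hv HP HQ.
  apply Rmult_integral in HP as [HP | HP]; [|lra].
  apply Rmult_integral in HQ as [HQ | HQ]; [|lra].
  assert (a / (u + v) * v + a / (u + v) * u = a) by (field; lra).
  lra.
Qed.

Lemma weighted_frac_bound a u v : 0 < u -> 0 < v ->
  - Rabs a <= a / (u + v) * v <= Rabs a.
Proof.
  intros Hu Hv.
  assert (Hq : 0 < v / (u + v) < 1).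
  { split; [apply Rdiv_lt_0_compat; lra|].
    apply (Rmult_lt_reg_r (u + v)); [lra|]. field_simplify; lra. }
  replace (a / (u + v) * v) with (a * (v / (u + v))) by (field; lra).
  set (q := v / (u + v)) in *.
  unfold Rabs. destruct Rcase_abs; split; nra.
Qed.

Lemma Pf_lower_bound rx C a u v B : 0 <= rx -> 0 <= C -> 0 < u -> 0 < v ->
  u + v <= B -> - (C * B + Rabs a) * u <= Pf rx C a u v.
Proof.
  intros Hrx HC Hu Hv HB. unfold Pf.
  pose proof (weighted_frac_bound a u v Hu Hv).
  assert (C * (u + v) <= C * B) by (apply Rmult_le_compat_l; auto).
  apply Rmult_le_compat_r; lra.
Qed.

Section Positivity.

Variables (rx ry C a : R) (nx ny : R -> R) (t0 : R).
Hypotheses (Hrx : 0 <= rx) (Hry : 0 <= ry) (HC : 0 <= C).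
Hypothesis Hderiv : forall t, t0 <= t ->
  derivable_pt_lim nx t (Pf rx C a (nx t) (ny t)) /\
  derivable_pt_lim ny t (Qf ry C a (nx t) (ny t)).
Hypotheses (Hx0 : 0 < nx t0) (Hy0 : 0 < ny t0).

(* At the first time [s] where [min nx ny] vanishes, both densities have
   decayed at most exponentially on [t0, s], so neither can be zero. *)
Lemma solution_stays_positive t : t0 <= t -> 0 < nx t /\ 0 < ny t.
Proof.
  intros Ht. apply NNPP. intros Hneg.
  set (m x := Rmin (nx x) (ny x)).
  assert (Hm : forall x, 0 < m x <-> 0 < nx x /\ 0 < ny x).
  { intros x. unfold m, Rmin. destruct Rle_dec; split; intros; lra. }
  assert (Hcx : forall x, t0 <= x -> continuity_pt nx x) by
    (intros x Hx; exact (derivable_pt_lim_continuity_pt _ _ _ (proj1 (Hderiv x Hx)))).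
  assert (Hcy : forall x, t0 <= x -> continuity_pt ny x) by
    (intros x Hx; exact (derivable_pt_lim_continuity_pt _ _ _ (proj2 (Hderiv x Hx)))).
  assert (Htt : t0 < t).
  { destruct (Rle_lt_or_eq_dec t0 t Ht) as [h | <-]; [exact h | tauto]. }
  destruct (first_nonpos m t0 t Htt) as [s [Hs [Hms Hpos]]].
  - intros x Hx. apply continuity_pt_Rmin; [apply Hcx | apply Hcy]; lra.
  - apply Hm; auto.
  - apply Rnot_lt_le. intros h. apply Hneg, Hm, h.
  - destruct (continuity_ab_maj (fun x => nx x + ny x) t0 s ltac:(lra)) as [xM [HM _]].
    { intros x Hx. apply continuity_pt_plus; [apply Hcx | apply Hcy]; lra. }
    set (K := C * (nx xM + ny xM) + Rabs a).
    assert (0 < nx s).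
    { apply (pos_of_deriv_ge_linear nx (fun x => Pf rx C a (nx x) (ny x)) K t0 s); [lra|..].
      - intros x Hx. apply Hderiv. lra.
      - intros x Hx. destruct (proj1 (Hm x) (Hpos x ltac:(lra))).
        apply Pf_lower_bound; auto. apply (HM x). lra.
      - exact Hx0. }
    assert (0 < ny s).
    { apply (pos_of_deriv_ge_linear ny (fun x => Qf ry C a (nx x) (ny x)) K t0 s); [lra|..].
      - intros x Hx. apply Hderiv. lra.
      - intros x Hx. destruct (proj1 (Hm x) (Hpos x ltac:(lra))).
        rewrite Qf_as_Pf. unfold K. rewrite <- (Rabs_Ropp a).
        apply Pf_lower_bound; auto. rewrite Rplus_comm. apply (HM x). lra.
      - exact Hy0. }
    assert (0 < m s) by (apply Hm; auto). lra.
Qed.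

End Positivity.

Lemma is_solution_eventually_positive rx ry C a nx ny :
  0 <= rx -> 0 <= ry -> 0 <= C ->
  is_solution (Pf rx C a) (Qf ry C a) nx ny -> 0 < nx 0 -> 0 < ny 0 ->
  exists t0, 0 < t0 /\ forall t, t0 <= t -> 0 < nx t /\ 0 < ny t.
Proof.
  intros Hrx Hry HC [Hd Hc] Hx0 Hy0.
  destruct (Hc (Rmin (nx 0) (ny 0)) ltac:(apply Rmin_glb_lt; auto)) as [d [Hdp Hnear]].
  destruct (Hnear (d / 2) ltac:(lra)) as [Hx Hy].
  apply Rabs_def2 in Hx. apply Rabs_def2 in Hy.
  pose proof (Rmin_l (nx 0) (ny 0)). pose proof (Rmin_r (nx 0) (ny 0)).
  exists (d / 2). split; [lra|].
  apply (solution_stays_positive rx ry C a nx ny); auto; try lra.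
  intros t Ht. apply Hd. lra.
Qed.

Lemma ln_le_inv x y : 0 < y -> ln x <= ln y -> x <= y.
Proof.
  intros Hy Hln. apply Rnot_lt_le. intros Hlt.
  pose proof (ln_increasing y x Hy Hlt). lra.
Qed.

Lemma Rabs_mult_le_of_small k p c : 0 <= c -> 0 <= p <= c / (Rabs k + 1) ->
  Rabs (k * p) <= c.
Proof.
  intros Hc Hp. pose proof (Rabs_pos k).
  rewrite Rabs_mult, (Rabs_pos_eq p) by lra.
  apply (Rle_trans _ (Rabs k * (c / (Rabs k + 1)))); [apply Rmult_le_compat_l; lra|].
  apply (Rmult_le_reg_r (Rabs k + 1)); [lra|]. field_simplify; nra.
Qed.

Section Convergence.

Variables (rx ry C a : R) (nx ny : R -> R) (t0 : R).
Hypothesis Hderiv : forall t, t0 <= t ->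
  derivable_pt_lim nx t (Pf rx C a (nx t) (ny t)) /\
  derivable_pt_lim ny t (Qf ry C a (nx t) (ny t)).
Hypothesis Hpos : forall t, t0 <= t -> 0 < nx t /\ 0 < ny t.

Let N t := nx t + ny t.

Lemma ln_ratio_affine t : t0 <= t ->
  ln (nx t) - ln (ny t) = ln (nx t0) - ln (ny t0) + (rx - ry + a) * (t - t0).
Proof.
  apply (affine_of_const_deriv (fun t => ln (nx t) - ln (ny t))).
  intros s Hs. destruct (Hpos s Hs), (Hderiv s Hs).
  eapply derivable_pt_lim_val;
    [|apply derivable_pt_lim_minus; apply derivable_pt_lim_ln_comp; eauto].
  unfold Pf, Qf. field. lra.
Qed.

Lemma ln_total_deriv t : t0 <= t -> derivable_pt_lim (fun s => ln (N s)) t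
  (ry + (rx - ry) * (nx t / N t) - C * N t).
Proof.
  intros Ht. destruct (Hpos t Ht), (Hderiv t Ht). unfold N.
  eapply derivable_pt_lim_val;
    [|apply derivable_pt_lim_ln_comp; [lra | apply derivable_pt_lim_plus; eauto]].
  unfold Pf, Qf. field. lra.
Qed.

Hypothesis Hfit : 0 < ry - rx - a.

Lemma share_vanishes d : 0 < d -> at_top (fun t => nx t <= d * N t).
Proof.
  intros Hd. set (S := ry - rx - a) in *. set (c0 := ln (nx t0) - ln (ny t0)).
  assert (Hwait : 0 <= Rabs (c0 - ln d) / S) by
    (apply Rdiv_le_0_compat; [apply Rabs_pos | lra]).
  exists (t0 + Rabs (c0 - ln d) / S). intros t Ht.
  assert (Ht0 : t0 <= t) by lra. destruct (Hpos t Ht0) as [Hx Hy].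
  assert (Hln : ln (nx t) - ln (ny t) <= ln d).
  { rewrite (ln_ratio_affine t Ht0). fold c0.
    assert (Rabs (c0 - ln d) <= S * (t - t0)).
    { replace (Rabs (c0 - ln d)) with (S * (Rabs (c0 - ln d) / S)) by (field; lra).
      apply Rmult_le_compat_l; lra. }
    pose proof (Rle_abs (c0 - ln d)). unfold S in *. lra. }
  assert (nx t <= d * ny t).
  { apply ln_le_inv; [nra|]. rewrite ln_mult by lra. lra. }
  unfold N. nra.
Qed.

Hypotheses (Hry : 0 < ry) (HC : 0 < C).

(* Once the share [nx / N] is below [d], the slope of [ln N] is within [c] of
   [C (ry / C - N)], so it is at most [- c] above [ry / C + e] and at least [c]
   below [ry / C - e]. *)
Lemma total_band e : 0 < e < ry / C ->
  at_top (fun t => ry / C - e <= N t <= ry / C + e).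
Proof.
  intros He. set (L := ry / C) in *.
  assert (HCL : C * L = ry) by (unfold L; field; lra).
  set (c := C * e / 2). assert (Hc : 0 < c) by (unfold c; nra).
  set (d := c / (Rabs (rx - ry) + 1)).
  assert (Hd : 0 < d) by
    (unfold d; apply Rdiv_lt_0_compat; [|pose proof (Rabs_pos (rx - ry))]; lra).
  destruct (at_top_and _ _ (at_top_ge t0) (share_vanishes d Hd)) as [T1 HT1].
  assert (Hdrift : forall t, T1 <= t -> Rabs ((rx - ry) * (nx t / N t)) <= c).
  { intros t Ht. destruct (HT1 t Ht) as [Ht0 Hshare]. destruct (Hpos t Ht0).
    apply Rabs_mult_le_of_small; [lra|]. unfold N in *. split.
    - apply Rlt_le, Rdiv_lt_0_compat; lra.
    - fold d. apply (Rmult_le_reg_r (nx t + ny t)); [lra|]. field_simplify; lra. }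
  assert (Hup : at_top (fun t => ln (N t) <= ln (L + e))).
  { apply (at_top_le_of_deriv_le (fun t => ln (N t))
      (fun t => ry + (rx - ry) * (nx t / N t) - C * N t) T1 (ln (L + e)) c Hc).
    - intros t Ht. apply ln_total_deriv. destruct (HT1 t Ht); lra.
    - intros t Ht Hln. destruct (HT1 t Ht) as [Ht0 _]. destruct (Hpos t Ht0).
      assert (L + e < N t) by (apply ln_lt_inv; unfold N in *; lra).
      pose proof (proj1 (Rabs_le_between _ _) (Hdrift t Ht)).
      unfold c in *. nra. }
  assert (Hlow : at_top (fun t => - ln (N t) <= - ln (L - e))).
  { apply (at_top_le_of_deriv_le (fun t => - ln (N t))
      (fun t => - (ry + (rx - ry) * (nx t / N t) - C * N t)) T1 (- ln (L - e)) c Hc).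
    - intros t Ht. apply derivable_pt_lim_opp with (f := fun s => ln (N s)).
      apply ln_total_deriv. destruct (HT1 t Ht); lra.
    - intros t Ht Hln. destruct (HT1 t Ht) as [Ht0 _]. destruct (Hpos t Ht0).
      assert (N t < L - e) by (apply ln_lt_inv; unfold N in *; lra).
      pose proof (proj1 (Rabs_le_between _ _) (Hdrift t Ht)).
      unfold c in *. nra. }
  destruct (at_top_and _ _ (at_top_and _ _ Hup Hlow) (at_top_ge t0)) as [T HT].
  exists T. intros t Ht. destruct (HT t Ht) as [[Hu Hl] Ht0]. destruct (Hpos t Ht0).
  split; apply ln_le_inv; unfold N in *; lra.
Qed.

Lemma total_tends : conv_infty N (ry / C).
Proof.
  intros eps Heps. set (L := ry / C).
  assert (HL : 0 < L) by (unfold L; apply Rdiv_lt_0_compat; lra).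
  set (e := Rmin (eps / 2) (L / 2)).
  assert (He1 : e <= eps / 2) by apply Rmin_l.
  assert (He2 : e <= L / 2) by apply Rmin_r.
  assert (He : 0 < e) by (apply Rmin_glb_lt; lra).
  apply (at_top_mono (fun t => L - e <= N t <= L + e)).
  - intros t [Hlo Hhi]. apply Rabs_def1; lra.
  - apply total_band. unfold L in *. lra.
Qed.

Lemma components_tend : conv_infty nx 0 /\ conv_infty ny (ry / C).
Proof.
  set (L := ry / C). assert (HL : 0 < L) by (unfold L; apply Rdiv_lt_0_compat; lra).
  assert (Hx : conv_infty nx 0).
  { intros eps Heps.
    assert (Hd : 0 < eps / (4 * L)) by (apply Rdiv_lt_0_compat; lra).
    apply (at_top_mono (fun t => t0 <= t /\ Rabs (N t - L) < L /\
                                 nx t <= eps / (4 * L) * N t)).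
    - intros t [Ht0 [HN Hshare]]. destruct (Hpos t Ht0).
      apply Rabs_def2 in HN.
      assert (eps / (4 * L) * N t <= eps / (4 * L) * (2 * L)) by
        (apply Rmult_le_compat_l; lra).
      replace (eps / (4 * L) * (2 * L)) with (eps / 2) in * by (field; lra).
      rewrite Rminus_0_r, Rabs_pos_eq; lra.
    - apply at_top_and; [apply at_top_ge|].
      apply at_top_and; [apply total_tends, HL | apply share_vanishes, Hd]. }
  split; [exact Hx|].
  apply (conv_infty_ext (fun t => N t - nx t)); [intros t; unfold N; ring|].
  replace L with (L - 0) by ring.
  apply conv_infty_minus; [apply total_tends | exact Hx].
Qed.
End Convergence.

Lemma solution_converges rx ry C a nx ny :
  0 <= rx -> 0 < ry -> 0 < C -> 0 < ry - rx - a ->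
  is_solution (Pf rx C a) (Qf ry C a) nx ny -> 0 < nx 0 -> 0 < ny 0 ->
  conv_infty nx 0 /\ conv_infty ny (ry / C).
Proof.
  intros Hrx Hry HC Hfit Hsol Hx0 Hy0.
  destruct (is_solution_eventually_positive rx ry C a nx ny) as [t0 [Ht0 Hpos]];
    auto; try lra.
  apply (components_tend rx ry C a nx ny t0); auto.
  intros t Ht. apply (proj1 Hsol). lra.
Qed.

Lemma exists_antiderivative (f : R -> R) : (forall t, continuous f t) ->
  exists F, F 0 = 0 /\ forall t, derivable_pt_lim F t (f t).
Proof.
  intros Hc. exists (RInt f 0). split; [exact (RInt_point (V := R_CompleteNormedModule) 0 f)|].
  intros t. apply is_derive_Reals, is_derive_RInt with (a := 0); [|apply Hc].
  apply filter_forall. intros b. apply (@RInt_correct R_CompleteNormedModule).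
  apply ex_RInt_continuous. intros z _. apply Hc.
Qed.

(* Variation of constants: [M t = exp (- G t) * (M0 + c * int_0^t exp (G s) ds)]
   with [G' = g]. *)
Lemma linear_ode_positive_solution (g : R -> R) (c M0 : R) :
  (forall t, continuous g t) -> 0 <= c -> 0 < M0 ->
  exists M, M 0 = M0 /\ (forall t, derivable_pt_lim M t (c - g t * M t)) /\
            forall t, 0 <= t -> 0 < M t.
Proof.
  intros Hg Hc HM0.
  destruct (exists_antiderivative g Hg) as [G [HG0 HG]].
  assert (HE : forall t, derivable_pt_lim (fun s => exp (G s)) t (exp (G t) * g t)).
  { intros t. apply (derivable_pt_lim_comp G exp); [apply HG | apply derivable_pt_lim_exp]. }
  destruct (exists_antiderivative (fun s => exp (G s))) as [H [HH0 HH]].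
  { intros t. apply (@ex_derive_continuous R_AbsRing R_NormedModule).
    eexists. apply is_derive_Reals, HE. }
  assert (HHpos : forall t, 0 <= t -> 0 <= H t).
  { intros t Ht. destruct (Rle_lt_or_eq_dec 0 t Ht) as [Hlt | <-]; [|lra].
    destruct (MVT_cor2 H _ 0 t Hlt (fun s _ => HH s)) as [s [Hs _]].
    pose proof (exp_pos (G s)). nra. }
  exists (fun t => exp (- G t) * (M0 + c * H t)). split; [|split].
  - rewrite HG0, HH0, Ropp_0, exp_0. ring.
  - intros t.
    apply (derivable_pt_lim_val _ _
      ((exp (- G t) * - g t) * (M0 + c * H t) + exp (- G t) * (0 + c * exp (G t)))).
    { rewrite exp_Ropp. field. pose proof (exp_pos (G t)). lra. }
    apply (derivable_pt_lim_mult (fun t => exp (- G t)) (fun t => M0 + c * H t)).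
    + apply (derivable_pt_lim_comp (fun t => - G t) exp).
      * apply (derivable_pt_lim_opp G), HG.
      * apply derivable_pt_lim_exp.
    + apply (derivable_pt_lim_plus (fun _ => M0) (fun t => c * H t)).
      * apply derivable_pt_lim_const.
      * apply (derivable_pt_lim_scal H), HH.
  - intros t Ht. pose proof (exp_pos (- G t)). pose proof (HHpos t Ht).
    apply Rmult_lt_0_compat; nra.
Qed.

(* Along any solution the ratio [w = ny / nx] satisfies [w' = S w] with
   [S = ry - rx - a], and [M = 1 / (nx + ny)] satisfies the linear equation
   [M' = C - g M] with [g = (rx + ry w) / (1 + w)]; this yields the solution
   [nx = 1 / (M (1 + w))], [ny = w / (M (1 + w))]. *)
Lemma exists_solution rx ry C a u0 v0 : 0 <= C -> 0 < u0 -> 0 < v0 ->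
  exists nx ny, nx 0 = u0 /\ ny 0 = v0 /\ is_solution (Pf rx C a) (Qf ry C a) nx ny.
Proof.
  intros HC Hu Hv.
  set (S := ry - rx - a). set (w t := v0 / u0 * exp (S * t)).
  assert (Hw : forall t, 0 < w t).
  { intros t. apply Rmult_lt_0_compat; [apply Rdiv_lt_0_compat; lra | apply exp_pos]. }
  assert (Hdw : forall t, derivable_pt_lim w t (S * w t)).
  { intros t. apply is_derive_Reals. unfold w. auto_derive; auto. ring. }
  set (g t := (rx + ry * w t) / (1 + w t)).
  assert (Hg : forall t, continuous g t).
  { intros t. apply (@ex_derive_continuous R_AbsRing R_NormedModule).
    unfold g, w. auto_derive. pose proof (Hw t). unfold w in *. lra. }
  destruct (linear_ode_positive_solution g C (/ (u0 + v0)) Hg HC)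
    as [M [HM0 [HdM HMpos]]].
  { apply Rinv_0_lt_compat. lra. }
  set (D t := M t * (1 + w t)).
  assert (HdD : forall t, derivable_pt_lim D t ((C - g t * M t) * (1 + w t) + M t * (0 + S * w t))).
  { intros t. apply (derivable_pt_lim_mult M (fun t => 1 + w t)); [apply HdM|].
    apply (derivable_pt_lim_plus (fun _ => 1) w); [apply derivable_pt_lim_const | apply Hdw]. }
  assert (HDpos : forall t, 0 <= t -> 0 < D t).
  { intros t Ht. apply Rmult_lt_0_compat; [apply HMpos, Ht | pose proof (Hw t); lra]. }
  assert (Hw0 : w 0 = v0 / u0) by (unfold w; rewrite Rmult_0_r, exp_0; ring).
  assert (HD0 : D 0 = 1 / u0) by (unfold D; rewrite HM0, Hw0; field; lra).
  exists (fun t => 1 / D t), (fun t => w t / D t). split; [|split].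
  - rewrite HD0. field. lra.
  - rewrite HD0, Hw0. field. lra.
  - apply is_solution_of_derivable. intros t Ht.
    pose proof (HDpos t Ht). pose proof (HMpos t Ht). pose proof (Hw t).
    split.
    + eapply derivable_pt_lim_val;
        [|apply (derivable_pt_lim_div (fun _ => 1) D);
          [apply derivable_pt_lim_const | apply HdD | lra]].
      unfold Pf, D, g, S, Rsqr. field. repeat split; lra.
    + eapply derivable_pt_lim_val;
        [|apply (derivable_pt_lim_div w D); [apply Hdw | apply HdD | lra]].
      unfold Qf, D, g, S, Rsqr. field. repeat split; lra.
Qed.

Theorem mainTheorem9 (rx ry C txy tyx : R)
  (hrx : 0 < rx) (hry : 0 < ry) (hC : 0 < C)
  (htxy : 0 <= txy) (htyx : 0 <= tyx) :
  let P := Pf rx C (alpha txy tyx) in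
  let Q := Qf ry C (alpha txy tyx) in
  let S := S_gen ry rx C C (alpha tyx txy) 0 1 in
  (S = ry - rx + alpha tyx txy /\ S = - S_gen rx ry C C (alpha txy tyx) 0 1) /\
  (S <> 0 -> forall u v, 0 < u -> 0 < v -> ~ (P u v = 0 /\ Q u v = 0)) /\
  (forall u0 v0, 0 < u0 -> 0 < v0 ->
     exists nx ny, nx 0 = u0 /\ ny 0 = v0 /\ is_solution P Q nx ny) /\
  (forall nx ny, is_solution P Q nx ny -> 0 < nx 0 -> 0 < ny 0 ->
     (0 < S -> conv_infty nx 0 /\ conv_infty ny (ry / C)) /\
     (S < 0 -> conv_infty nx (rx / C) /\ conv_infty ny 0)).
Proof.
  intros P Q S. set (a := alpha txy tyx) in *.
  assert (Ha : alpha tyx txy = - a) by (unfold a, alpha; ring).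
  assert (HS : S = ry - rx - a).
  { unfold S. rewrite S_gen_constant_competition, Ha by lra. ring. }
  split; [|split; [|split]].
  - rewrite Ha, HS, S_gen_constant_competition by lra. split; ring.
  - intros HS0 u v Hu Hv [HP HQ]. apply HS0. rewrite HS.
    exact (interior_equilibrium_fitness rx ry C a u v Hu Hv HP HQ).
  - intros u0 v0 Hu Hv. apply exists_solution; lra.
  - intros nx ny Hsol Hx0 Hy0. split; intros Hsign.
    + apply (solution_converges rx ry C a); auto; lra.
    + destruct (solution_converges ry rx C (- a) ny nx) as [Hy Hx]; try lra.
      * apply is_solution_swap, Hsol.
      * split; assumption.
Qed.
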